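(* Let $k\ge 1$ and $d\ge 0$ be integers and let $F_1,F_2$ be permutations (bijections, not necessarily linear) of $\mathbb{F}_2^k$. Then $(F_1,F_2)$ is a Correlation Immune Pair of strength $d$ if and only if the binary code $$C(F_1,F_2)=\{(x+y,\,F_1(x),\,F_2(y)) : x,y\in\mathbb{F}_2^k\}\subseteq \mathbb{F}_2^{3k},$$ which has $2^{2k}$ elements, has dual distance at least $d+1$.
   Context: For $a,x\in\mathbb{F}_2^k$, $a\cdot x$ is the usual scalar product and $w_H$ denotes Hamming weight. For a map $F:\mathbb{F}_2^k\to\mathbb{F}_2^k$ and $b\in\mathbb{F}_2^k$, let $b\cdot F$ be the Boolean function $x\mapsto b\cdot F(x)$, and define its Fourier transform at $a\in\mathbb{F}_2^k$ by $\widehat{b\cdot F}(a)=\sum_{x\in\mathbb{F}_2^k,\ b\cdot F(x)=1}(-1)^{a\cdot x}$ (an integer). A pair $(F_1,F_2)$ of permutations of $\mathbb{F}_2^k$ is a Correlation Immune Pair (CIP) of strength $d$ if for every $(a,b,c)\in(\mathbb{F}_2^k)^3$ with $a\neq 0$ and $w_H(a)+w_H(b)+w_H(c)\le d$, one has $\widehat{b\cdot F_1}(a)=0$ or $\widehat{c\cdot F_2}(a)=0$. For a (possibly nonlinear) binary code $C$ of length $n$, its distance distribution is $B_i=\frac{1}{|C|}|\{(x,y)\in C\times C: d_H(x,y)=i\}|$, $0\le i\le n$, with distance enumerator $D_C(X,Y)=\sum_i B_iX^{n-i}Y^i$; the dual distance distribution $(B_i^\perp)$ is defined by $\sum_i B_i^\perp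 X^{n-i}Y^i=\frac{1}{|C|}D_C(X+Y,X-Y)$, and the dual distance of $C$ is the smallest $i>0$ with $B_i^\perp\neq 0$ (taken to be $+\infty$ if there is none). *)

From HB Require Import structures.
From mathcomp Require Import all_boot all_order all_algebra all_fingroup.
Set Implicit Arguments. Unset Strict Implicit. Unset Printing Implicit Defensive.
Import Order.TTheory GRing.Theory Num.Theory.
Local Open Scope ring_scope.

Notation vec k := 'rV['F_2]_k.

Definition dotv k (a x : vec k) : 'F_2 := \sum_(i < k) a 0 i * x 0 i.

Definition wH n (a : vec n) : nat := #|[set i : 'I_n | a 0 i != 0]|.

Definition dH n (x y : vec n) : nat := wH (x - y).

Definition fourier k (F : vec k -> vec k) (b a : vec k) : int :=
  \sum_(x : vec k | dotv b (F x) == 1) (if dotv a x == 0 then 1 else -1).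

Definition CIP k (F1 F2 : vec k -> vec k) (d : nat) : Prop :=
  forall a b c : vec k, a != 0 -> (wH a + wH b + wH c <= d)%N ->
    fourier F1 b a = 0 \/ fourier F2 c a = 0.

Definition distB n (C : {set vec n}) (i : nat) : rat :=
  #|[set p : vec n * vec n | (p.1 \in C) && (p.2 \in C) && (dH p.1 p.2 == i)]|%:R
    / #|C|%:R.

(* D_C(X+Y, X-Y) as a bivariate polynomial in {poly {poly rat}}:
   the inner variable is X (written 'X%:P), the outer variable is Y ('X). *)
Definition distEnum_transformed n (C : {set vec n}) : {poly {poly rat}} :=
  \sum_(i < n.+1) (distB C i)%:P%:P *
     ('X%:P + 'X) ^+ (n - i) * ('X%:P - 'X) ^+ i.

(* dual distance distribution: B^perp_i is (1/|C|) times the coefficient of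
   X^(n-i) Y^i in D_C(X+Y, X-Y) *)
Definition dualB n (C : {set vec n}) (i : nat) : rat :=
  ((distEnum_transformed C)`_i)`_(n - i) / #|C|%:R.

(* "dual distance >= m": no i with 0 < i < m has B^perp_i <> 0
   (covers the case dual distance = +oo) *)
Definition dual_dist_ge n (C : {set vec n}) (m : nat) : Prop :=
  forall i : nat, (0 < i)%N -> (i < m)%N -> dualB C i = 0.

Definition codeC k (F1 F2 : vec k -> vec k) : {set vec (k + k + k)} :=
  [set row_mx (row_mx (x + y) (F1 x)) (F2 y) | x : vec k, y : vec k].

From HB Require Import structures.
From mathcomp Require Import all_boot all_order all_algebra all_fingroup.
From mathcomp Require Import ring.
Set Implicit Arguments. Unset Strict Implicit. Unset Printing Implicit Defensive.
Import Order.TTheory GRing.Theory Num.Theory.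
Local Open Scope ring_scope.

(* By MacWilliams' identity, |C|^2 B^perp_i is the sum of the squares of the
   character sums S_C(u) = sum_(c in C) (-1)^(u.c) over the words u of weight
   i, so C has dual distance > d exactly when S_C vanishes on all nonzero u of
   weight at most d.  For C = C(F1,F2) and u = (a,b,c) the character sum
   factorises as W_F1(a,b) W_F2(a,c) with W_F(a,b) = sum_x (-1)^(a.x + b.F(x)).
   For a <> 0 one has W_F(a,b) = -2 \hat{b.F}(a); for a = 0 and b <> 0,
   W_F(0,b) vanishes because F is a permutation and b.y is balanced. *)

Lemma F2_cases (z : 'F_2) : z = 0 \/ z = 1.
Proof. by case: z => [[|[|n]] lt_n2]; [left|right|]; try apply/val_inj. Qed.

Lemma F2_neq0 (z : 'F_2) : z != 0 -> z = 1.
Proof. by case: (F2_cases z) => ->. Qed.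

Lemma big_F2 (R : nmodType) (F : 'F_2 -> R) : \sum_(j : 'F_2) F j = F 0 + F 1.
Proof.
rewrite big_ord_recl big_ord_recl big_ord0 addr0.
by congr (F _ + F _); apply/val_inj.
Qed.

Definition sgn (R : pzRingType) (z : 'F_2) : R := if z == 0 then 1 else -1.

Section Sign.
Variable R : pzRingType.

Lemma sgn0 : sgn R 0 = 1.
Proof. by rewrite /sgn eqxx. Qed.

Lemma sgn1 : sgn R 1 = -1.
Proof. by []. Qed.

Lemma sgnD (x y : 'F_2) : sgn R (x + y) = sgn R x * sgn R y.
Proof.
case: (F2_cases x) => ->; case: (F2_cases y) => ->;
  rewrite ?addr0 ?add0r ?sgn0 ?sgn1 ?mul1r ?mulr1 //.
by rewrite (_ : 1 + 1 = 0 :> 'F_2) ?sgn0 ?mulrNN ?mulr1 //; apply/val_inj.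
Qed.

Lemma sgnN (x : 'F_2) : sgn R (- x) = sgn R x.
Proof. by case: (F2_cases x) => ->; rewrite ?oppr0. Qed.

Lemma sgnB (x y : 'F_2) : sgn R (x - y) = sgn R x * sgn R y.
Proof. by rewrite sgnD sgnN. Qed.

Lemma sgn_sum (I : finType) (F : I -> 'F_2) :
  sgn R (\sum_i F i) = \prod_i sgn R (F i).
Proof. exact: (big_morph _ sgnD sgn0). Qed.

Lemma rmorph_sgn (S : pzRingType) (f : {rmorphism R -> S}) z :
  f (sgn R z) = sgn S z.
Proof. by rewrite /sgn; case: ifP; rewrite ?rmorph1 ?rmorphN1. Qed.

End Sign.

Lemma dotvDr k (a x y : vec k) : dotv a (x + y) = dotv a x + dotv a y.
Proof. by rewrite /dotv -big_split; apply: eq_bigr => i _; rewrite mxE mulrDr. Qed.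

Lemma dotvNr k (a x : vec k) : dotv a (- x) = - dotv a x.
Proof. by rewrite /dotv -sumrN; apply: eq_bigr => i _; rewrite mxE mulrN. Qed.

Lemma dotvBr k (a x y : vec k) : dotv a (x - y) = dotv a x - dotv a y.
Proof. by rewrite dotvDr dotvNr. Qed.

Lemma dot0v k (x : vec k) : dotv 0 x = 0.
Proof. by rewrite /dotv big1 // => i _; rewrite mxE mul0r. Qed.

Lemma dotv_row_mx m n (a1 x1 : vec m) (a2 x2 : vec n) :
  dotv (row_mx a1 a2) (row_mx x1 x2) = dotv a1 x1 + dotv a2 x2.
Proof.
by rewrite /dotv big_split_ord; congr (_ + _); apply: eq_bigr => i _;
  rewrite ?row_mxEl ?row_mxEr.
Qed.

Lemma dotv_delta n (a : vec n) i : dotv a (delta_mx 0 i) = a 0 i.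
Proof.
rewrite /dotv (bigD1 i) //= big1 ?addr0; first by rewrite mxE !eqxx mulr1.
by move=> j /negbTE nji; rewrite mxE nji andbF mulr0.
Qed.

(* Orthogonality of characters: translating by a vector e with a.e = 1
   changes the sign of every term. *)
Lemma sum_sgn_dotv n (a : vec n) : a != 0 -> \sum_(x : vec n) sgn rat (dotv a x) = 0.
Proof.
move=> a_neq0.
have [i a_i] : exists i, a 0 i != 0.
  apply/existsP; apply: contraR a_neq0 => /existsPn a0; apply/eqP/rowP => i.
  by rewrite mxE; apply/eqP; move: (a0 i); rewrite negbK.
pose e : vec n := delta_mx 0 i.
have a_e : dotv a e = 1 by rewrite /e dotv_delta; apply: F2_neq0.
set S := \sum_x _.
have S_opp : S = - S.
  transitivity (\sum_x sgn rat (dotv a (e + x))); first exact: reindex_inj (addrI e).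
  rewrite /S -sumrN; apply: eq_bigr => x _.
  by rewrite dotvDr sgnD a_e sgn1 mulN1r.
have : S *+ 2 = 0 by rewrite mulr2n {1}S_opp addNr.
by move/eqP; rewrite mulrn_eq0 => /eqP.
Qed.

Lemma wHE n (a : vec n) : wH a = (\sum_(i < n) (a ord0 i != 0%R))%N.
Proof.
rewrite /wH -sum1_card big_mkcond; apply: eq_bigr => i _.
by rewrite inE; case: (a 0 i != 0).
Qed.

Lemma wH_row_mx m n (a : vec m) (b : vec n) : wH (row_mx a b) = (wH a + wH b)%N.
Proof.
by rewrite !wHE big_split_ord; congr (_ + _)%N; apply: eq_bigr => i _;
  rewrite ?row_mxEl ?row_mxEr.
Qed.

Lemma wH_le n (a : vec n) : (wH a <= n)%N.
Proof. by apply: leq_trans (max_card _) _; rewrite card_ord. Qed.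

Lemma wH_eq0 n (a : vec n) : (wH a == 0%N) = (a == 0).
Proof.
rewrite /wH cards_eq0; apply/eqP/eqP => [supp0|->].
  apply/rowP => i; rewrite mxE; apply/eqP; apply: contraT => a_i.
  by have := in_set0 i; rewrite -supp0 inE a_i.
by apply/setP => i; rewrite !inE mxE eqxx.
Qed.

Lemma wH_gt0 n (a : vec n) : a != 0 -> (0 < wH a)%N.
Proof. by rewrite lt0n wH_eq0. Qed.

Lemma card_zeros n (v : vec n) : #|[set i | v 0 i == 0]| = (n - wH v)%N.
Proof.
apply/eqP; rewrite -(eqn_add2r (wH v)) subnK ?wH_le //.
rewrite /wH -[X in _ == X](card_ord n) -(cardsC [set i | v 0 i != 0]) addnC.
by apply/eqP; congr (_ + _)%N; apply: eq_card => i; rewrite !inE negbK.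
Qed.

Lemma prodr_const_set (R : pzSemiRingType) n (P : pred 'I_n) (c : R) :
  \prod_(i | P i) c = c ^+ #|[set i | P i]|.
Proof. by rewrite -prodr_const; apply: eq_bigl => i; rewrite inE. Qed.

Local Notation PP := {poly {poly rat}}.

Definition wmonomial n (u : vec n) : PP := 'X%:P ^+ (n - wH u) * 'X ^+ wH u.

(* Expand the product over the coordinates: the factor for coordinate i is
   X + (-1)^(v_i) Y, i.e. the sum over j in F_2 of (-1)^(j v_i) X or Y. *)
Lemma wmonomial_transform n (v : vec n) :
  ('X%:P + 'X) ^+ (n - wH v) * ('X%:P - 'X) ^+ wH v
  = \sum_(u : vec n) sgn PP (dotv u v) * wmonomial u.
Proof.
pose G (i : 'I_n) (j : 'F_2) : PP :=
  sgn PP (j * v 0 i) * (if j == 0 then 'X%:P else 'X).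
have -> : ('X%:P + 'X) ^+ (n - wH v) * ('X%:P - 'X) ^+ wH v
          = \prod_(i < n) \sum_(j : 'F_2) G i j.
  rewrite (bigID (fun i => v 0 i == 0)) /=.
  rewrite (eq_bigr (fun _ => 'X%:P + 'X)); last first.
    by move=> i /eqP v_i; rewrite big_F2 /G mul0r mul1r v_i sgn0 !mul1r.
  rewrite [X in _ = _ * X](eq_bigr (fun _ => 'X%:P - 'X)); last first.
    move=> i v_i; rewrite big_F2 /G mul0r mul1r sgn0 mul1r.
    by rewrite /sgn (negbTE v_i) mulN1r.
  by rewrite !prodr_const_set card_zeros.
rewrite bigA_distr_bigA (reindex (fun u : vec n => [ffun i => u 0 i])) /=; last first.
  apply: onW_bij; exists (fun f : {ffun 'I_n -> 'F_2} => \row_i f i).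
    by move=> u; apply/rowP => i; rewrite !mxE ffunE.
  by move=> f; apply/ffunP => i; rewrite ffunE mxE.
apply: eq_bigr => u _; rewrite (eq_bigr (fun i => G i (u 0 i))) => [|i _]; last first.
  by rewrite ffunE.
rewrite /G big_split /= -sgn_sum; congr (_ * _).
rewrite (bigID (fun i => u 0 i == 0)) /=.
rewrite (eq_bigr (fun _ => 'X%:P)) => [|i ->] //.
rewrite [X in _ * X](eq_bigr (fun _ => 'X)) => [|i /negbTE ->] //.
by rewrite !prodr_const_set card_zeros.
Qed.

Lemma coef_wmonomial n (c : rat) (u : vec n) i j :
  ((c%:P%:P * wmonomial u)`_i)`_j = c * ((wH u == i) && (n - wH u == j)%N)%:R.
Proof.
rewrite /wmonomial mulrA -rmorphXn -polyCM coefMXn.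
have [lt_iw|le_wi] := ltnP i (wH u).
  by rewrite coef0 eq_sym (ltn_eqF lt_iw) mulr0.
rewrite coefC; have [->|w_neq_i] /= := eqVneq (wH u) i.
  by rewrite subnn eqxx coefCM coefXn eq_sym.
by rewrite subn_eq0 leqNgt ltn_neqAle w_neq_i le_wi coef0 mulr0.
Qed.

Definition charsum n (C : {set vec n}) (u : vec n) : rat :=
  \sum_(c in C) sgn rat (dotv u c).

Lemma distEnum_transformedE n (C : {set vec n}) : #|C| != 0%N ->
  (#|C|%:R)%:P%:P * distEnum_transformed C =
  \sum_(u : vec n) (charsum C u ^+ 2)%:P%:P * wmonomial u.
Proof.
move=> C_neq0.
pose P (i : nat) : PP := ('X%:P + 'X) ^+ (n - i) * ('X%:P - 'X) ^+ i.
pose inC (p : vec n * vec n) := (p.1 \in C) && (p.2 \in C).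
have -> : (#|C|%:R)%:P%:P * distEnum_transformed C =
    \sum_(i < n.+1) \sum_(p | inC p && (dH p.1 p.2 == i)) P i.
  rewrite /distEnum_transformed mulr_sumr; apply: eq_bigr => i _.
  rewrite !mulrA -!polyCM /distB [X in X%:P%:P]mulrC divfK ?pnatr_eq0 //.
  rewrite -mulrA -/(P i) !rmorph_nat mulr_natl -sumr_const.
  by apply: eq_bigl => p; rewrite inE.
have -> : \sum_(i < n.+1) \sum_(p | inC p && (dH p.1 p.2 == i)) P i
    = \sum_(p | inC p) P (dH p.1 p.2).
  rewrite (partition_big (fun p => inord (dH p.1 p.2) : 'I_n.+1) xpredT) //=.
  apply: eq_bigr => i _; apply: eq_big => [p|p /andP[_ /eqP ->] //].
  have dH_lt : (dH p.1 p.2 < n.+1)%N by rewrite ltnS wH_le.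
  congr (_ && _); apply/eqP/eqP => [dH_i|<-]; last by rewrite inordK.
  by apply/val_inj; rewrite /= inordK dH_i.
rewrite -(pair_big_dep (mem C) (fun _ => mem C) (fun c c' => P (dH c c'))) /=.
under eq_bigr => c _.
  under eq_bigr => c' _ do rewrite /P /dH wmonomial_transform.
  rewrite exchange_big; over.
rewrite exchange_big /=; apply: eq_bigr => u _.
rewrite /charsum expr2 !rmorphM !rmorph_sum big_distrl /= mulr_suml.
apply: eq_bigr => c _; rewrite big_distrr /= mulr_suml.
by apply: eq_bigr => c' _; rewrite dotvBr sgnB !rmorph_sgn.
Qed.

Lemma dualB_eq0 n (C : {set vec n}) i : #|C| != 0%N ->
  dualB C i = 0 <-> forall u : vec n, wH u = i -> charsum C u = 0.
Proof.
move=> C_neq0; have C_neq0' : (#|C|%:R : rat) != 0 by rewrite pnatr_eq0.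
have coefE : #|C|%:R * ((distEnum_transformed C)`_i)`_(n - i) =
               \sum_(u : vec n | wH u == i) charsum C u ^+ 2.
  rewrite -!coefCM distEnum_transformedE // !coef_sum [RHS]big_mkcond.
  apply: eq_bigr => u _; rewrite coef_wmonomial.
  by case: eqVneq => [->|_]; rewrite ?eqxx ?mulr1 ?mulr0.
have -> : dualB C i = (\sum_(u : vec n | wH u == i) charsum C u ^+ 2) / #|C|%:R ^+ 2.
  by rewrite -coefE /dualB; field.
split=> [/eqP | charsum0]; last by rewrite big1 ?mul0r // => u /eqP/charsum0 ->; rewrite expr0n.
rewrite mulf_eq0 invr_eq0 expf_eq0 (negbTE C_neq0') andbF orbF.
rewrite psumr_eq0 => [/allP sq0 u w_u|u _]; last exact: sqr_ge0.
by apply/eqP; rewrite -sqrf_eq0; have := sq0 u (mem_index_enum u); rewrite w_u eqxx.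
Qed.

Lemma dual_dist_geE n (C : {set vec n}) m : #|C| != 0%N ->
  dual_dist_ge C m <-> forall u : vec n, u != 0 -> (wH u < m)%N -> charsum C u = 0.
Proof.
move=> C_neq0; split=> [dual u u_neq0 lt_um | charsum0 i i_gt0 lt_im].
  by apply: (dualB_eq0 _ C_neq0).1 (dual _ (wH_gt0 u_neq0) lt_um) u erefl.
apply/(dualB_eq0 _ C_neq0) => u w_u; apply: charsum0; last by rewrite w_u.
by rewrite -wH_eq0 w_u -lt0n.
Qed.

Definition walsh k (F : vec k -> vec k) (a b : vec k) : rat :=
  \sum_(x : vec k) sgn rat (dotv a x + dotv b (F x)).

Lemma walsh0 k (F : {perm vec k}) (b : vec k) : b != 0 -> walsh F 0 b = 0.
Proof.
move=> b_neq0; rewrite /walsh -[RHS](sum_sgn_dotv b_neq0).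
under eq_bigr do rewrite dot0v add0r.
by rewrite [RHS](reindex_inj (@perm_inj _ F)).
Qed.

Lemma walsh_fourier k (F : vec k -> vec k) (a b : vec k) : a != 0 ->
  walsh F a b = - 2 * (fourier F b a)%:~R.
Proof.
move=> a_neq0.
have -> : walsh F a b = \sum_(x : vec k) sgn rat (dotv a x)
      - 2 * \sum_(x : vec k | dotv b (F x) == 1) sgn rat (dotv a x).
  rewrite [X in _ - 2 * X]big_mkcond mulr_sumr -sumrB; apply: eq_bigr => x _.
  by rewrite sgnD; case: (F2_cases (dotv b (F x))) => ->; rewrite ?sgn0 ?sgn1 /=; ring.
rewrite sum_sgn_dotv // sub0r /fourier rmorph_sum mulNr; congr (- (_ * _)).
by apply: eq_bigr => x _; rewrite /sgn; case: (_ == 0).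
Qed.

Lemma walsh_eq0 k (F : vec k -> vec k) (a b : vec k) : a != 0 ->
  (walsh F a b == 0) = (fourier F b a == 0).
Proof. by move=> a_neq0; rewrite walsh_fourier // mulf_eq0 intr_eq0. Qed.

Definition codeword k (F1 F2 : vec k -> vec k) (p : vec k * vec k) : vec (k + k + k) :=
  row_mx (row_mx (p.1 + p.2) (F1 p.1)) (F2 p.2).

Lemma codeCE k (F1 F2 : vec k -> vec k) :
  codeC F1 F2 = [set codeword F1 F2 p | p : vec k * vec k].
Proof.
apply/setP => w; apply/imset2P/imsetP => [[x y _ _ ->]|[p _ ->]]; first by exists (x, y).
by exists p.1 p.2.
Qed.

Lemma codeword_inj k (F1 F2 : {perm vec k}) : injective (codeword F1 F2).
Proof.
move=> [x y] [x' y'] /eq_row_mx [/eq_row_mx [/= eq_sum /perm_inj eq_x _]].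
by rewrite -eq_x in eq_sum *; rewrite (addrI _ eq_sum).
Qed.

Lemma card_codeC_neq0 k (F1 F2 : {perm vec k}) : #|codeC F1 F2| != 0%N.
Proof.
rewrite cards_eq0; apply/set0Pn; exists (codeword F1 F2 (0, 0)).
by rewrite codeCE imset_f.
Qed.

Lemma charsum_codeC k (F1 F2 : {perm vec k}) (a b c : vec k) :
  charsum (codeC F1 F2) (row_mx (row_mx a b) c) = walsh F1 a b * walsh F2 a c.
Proof.
rewrite /charsum codeCE big_imset /= => [|p q _ _]; last exact: codeword_inj.
rewrite /walsh big_distrlr pair_bigA (eq_bigl xpredT) //; apply: eq_bigr => -[x y] _.
rewrite /= /codeword !dotv_row_mx dotvDr -sgnD; congr sgn.
by rewrite -!addrA; congr (_ + _); rewrite addrCA.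
Qed.

Lemma charsum_codeC_eq0 k (F1 F2 : {perm vec k}) (a b c : vec k) :
  row_mx (row_mx a b) c != 0 ->
  charsum (codeC F1 F2) (row_mx (row_mx a b) c) = 0 <->
  (a != 0 -> fourier F1 b a = 0 \/ fourier F2 c a = 0).
Proof.
rewrite charsum_codeC !row_mx_eq0 !negb_and => u_neq0.
have [a0|a_neq0] := eqVneq a 0.
  split=> // _; rewrite a0 eqxx /= in u_neq0 *.
  by case/orP: u_neq0 => nz; rewrite (walsh0 _ nz) ?mul0r ?mulr0.
split=> [/eqP | four0]; last first.
  by apply/eqP; rewrite mulf_eq0 !walsh_eq0 //; case: (four0 isT) => ->; rewrite eqxx ?orbT.
by rewrite mulf_eq0 !walsh_eq0 // => /orP[] /eqP four0 _; [left|right].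
Qed.

Theorem theorem1 (k d : nat) (F1 F2 : {perm 'rV['F_2]_k}) :
  (1 <= k)%N ->
  (CIP F1 F2 d <-> dual_dist_ge (codeC F1 F2) d.+1).
Proof.
move=> _; have C_neq0 := card_codeC_neq0 F1 F2.
split=> [cip | dual a b c a_neq0 le_d].
  apply/(dual_dist_geE _ C_neq0) => u; rewrite ltnS.
  rewrite -[u]hsubmxK -[lsubmx u]hsubmxK => u_neq0 le_d.
  apply/(charsum_codeC_eq0 _ _ u_neq0) => a_neq0; apply: cip => //.
  by rewrite -!wH_row_mx.
have u_neq0 : row_mx (row_mx a b) c != 0 by rewrite !row_mx_eq0 (negbTE a_neq0).
apply: (charsum_codeC_eq0 F1 F2 u_neq0).1 a_neq0.
by apply: (dual_dist_geE _ C_neq0).1 dual _ u_neq0 _; rewrite ltnS !wH_row_mx.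
Qed.
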